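(* Suppose that a group $G$ has a non-elementary action by isometries on a geodesic $\delta$-hyperbolic space $X$, and that $G$ contains a WPD element. Let $o\in X$. For any $0<\eta<1$ there exists $C>0$ such that for any $D>0$ and any $K>0$ there is a finite set $S\subseteq G$ which is $(\eta,C,D)$-Schottky and such that for every $s\in S$ the coarse joint stabilizer $\mathrm{Stab}_K(o,so)$ is finite.
   Context: Gromov product $(x,y)_z=\frac12(d(x,z)+d(y,z)-d(x,y))$. A finite set $S$ is $(\eta,C,D)$-Schottky if for all $x,y\in X$, $\#\{s\in S:(x,sy)_o\le C\}\ge(1-\eta)\#S$ and $\#\{s\in S:(x,s^{-1}y)_o\le C\}\ge(1-\eta)\#S$, and $d(o,so)\ge D$ for all $s\in S$. $\mathrm{Stab}_K(x,y)=\{g\in G:d(x,gx)\le K,\ d(y,gy)\le K\}$. An element $g$ is loxodromic if $\lim_n d(g^no,o)/n>0$; it is WPD if it is loxodromic and for any $x\in X$, $K\ge0$ there is $P\ge1$ with $\mathrm{Stab}_K(x,g^Px)$ finite. The action is non-elementary if there are two loxodromic elements with disjoint fixed sets in $\partial X$. *)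

From Stdlib Require Import Reals List ClassicalEpsilon.
Open Scope R_scope.
Set Implicit Arguments.

Record Group := {
  gcar :> Type;
  gmul : gcar -> gcar -> gcar;
  gone : gcar;
  ginv : gcar -> gcar;
  gmul_assoc : forall a b c, gmul a (gmul b c) = gmul (gmul a b) c;
  gmul_1l : forall a, gmul gone a = a;
  gmul_Vl : forall a, gmul (ginv a) a = gone
}.

Fixpoint gpow (G : Group) (g : G) (n : nat) : G :=
  match n with O => gone G | S k => gmul G g (gpow G g k) end.
Arguments gpow {G}.

Definition is_metric (X : Type) (d : X -> X -> R) : Prop :=
  (forall x y, 0 <= d x y) /\ (forall x y, d x y = 0 <-> x = y) /\
  (forall x y, d x y = d y x) /\ (forall x y z, d x z <= d x y + d y z).

Definition geodesic_space (X : Type) (d : X -> X -> R) : Prop :=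
  forall x y : X, exists gam : R -> X,
    gam 0 = x /\ gam (d x y) = y /\
    forall s t, 0 <= s <= d x y -> 0 <= t <= d x y ->
      d (gam s) (gam t) = Rabs (s - t).

Definition gromov (X : Type) (d : X -> X -> R) (x y z : X) : R :=
  (d x z + d y z - d x y) / 2.

Definition hyperbolic (X : Type) (d : X -> X -> R) (delta : R) : Prop :=
  0 <= delta /\
  forall x y z w, gromov d x y w >= Rmin (gromov d x z w) (gromov d y z w) - delta.

Definition isometric_action {G : Group} {X : Type} (d : X -> X -> R)
  (act : G -> X -> X) : Prop :=
  (forall x, act (gone G) x = x) /\
  (forall g h x, act (gmul G g h) x = act g (act h x)) /\
  (forall g x y, d (act g x) (act g y) = d x y).

Definition stab_finite {G : Group} {X : Type} (d : X -> X -> R)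
  (act : G -> X -> X) (K : R) (x y : X) : Prop :=
  exists l : list G, forall g : G,
    d x (act g x) <= K -> d y (act g y) <= K -> In g l.

Definition loxodromic {G : Group} {X : Type} (d : X -> X -> R)
  (act : G -> X -> X) (o : X) (g : G) : Prop :=
  exists l, l > 0 /\ Un_cv (fun n => d (act (gpow g n) o) o / INR n) l.

Definition WPD {G : Group} {X : Type} (d : X -> X -> R)
  (act : G -> X -> X) (o : X) (g : G) : Prop :=
  loxodromic d act o g /\
  forall (x : X) (K : R), K >= 0 ->
    exists P : nat, (1 <= P)%nat /\ stab_finite d act K x (act (gpow g P) x).

(** Gromov boundary: sequences converging at infinity, up to equivalence. *)
Definition equiv_at_inf (X : Type) (d : X -> X -> R) (w : X) (u v : nat -> X) : Prop :=
  forall M : R, exists N : nat, forall n m : nat, (N <= n)%nat -> (N <= m)%nat ->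
    gromov d (u n) (v m) w >= M.

Definition conv_at_inf (X : Type) (d : X -> X -> R) (w : X) (u : nat -> X) : Prop :=
  equiv_at_inf d w u u.

Definition fixes_bdry {G : Group} {X : Type} (d : X -> X -> R)
  (act : G -> X -> X) (w : X) (g : G) (u : nat -> X) : Prop :=
  equiv_at_inf d w (fun n => act g (u n)) u.

Definition non_elementary {G : Group} {X : Type} (d : X -> X -> R)
  (act : G -> X -> X) (w : X) : Prop :=
  exists g h : G, loxodromic d act w g /\ loxodromic d act w h /\
    ~ (exists u : nat -> X, conv_at_inf d w u /\
         fixes_bdry d act w g u /\ fixes_bdry d act w h u).

(** Cardinality of {s in S | P s} (S a duplicate-free list). *)
Definition count_P (A : Type) (P : A -> Prop) (S : list A) : nat :=
  length (filter (fun s => if excluded_middle_informative (P s) then true else false) S).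

Definition schottky {G : Group} {X : Type} (d : X -> X -> R)
  (act : G -> X -> X) (o : X) (eta C D : R) (S : list G) : Prop :=
  (forall x y : X,
     INR (count_P (fun s => gromov d x (act s y) o <= C) S) >= (1 - eta) * INR (length S) /\
     INR (count_P (fun s => gromov d x (act (ginv G s) y) o <= C) S) >= (1 - eta) * INR (length S)) /\
  (forall s, In s S -> d o (act s o) >= D).

(* Each loxodromic [f] has a quasi-axis through [o]: the Gromov products [(f^-a o, f^b o)_o]
   are bounded, because the orbit of a large power of [f] is a chain of long steps with small
   corner products. Non-elementarity makes the endpoints of two loxodromics [g], [h] pairwise
   distinct, so some [p] among [g], [g^-1], [h] has its attracting endpoint away from both
   endpoints of the WPD element [w]; let [q] be the other loxodromic. The elements
   [s_i = Y_i X W X^-1 Y_i^-1], with [Y_i = q^(M(i+1))], [X = p^-M] and [W = w^n], have orbit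
   points that follow the chain of letters, so the [s_i o] (and the [s_i^-1 o]) pairwise branch
   off near [Y_i o], at a distance independent of [n]. Ping-pong then gives the Schottky
   estimate for all but two of the [s_i]; taking [n] large makes the [s_i] long, and
   [Stab_K(o, s_i o)] lies in a conjugate of [Stab_K'(o, W o)], which is finite by WPD. *)

From Stdlib Require Import Reals List Lra Lia ZArith Classical ClassicalEpsilon.
Open Scope R_scope.

Section GroupTheory.
Variable G : Group.
Notation "a * b" := (gmul G a b).
Notation inv := (ginv G).

Lemma gmul_cancel_l (a b c : G) : a * b = a * c -> b = c.
Proof.
  intro H. rewrite <- (gmul_1l G b), <- (gmul_1l G c), <- (gmul_Vl G a).
  rewrite <- !gmul_assoc, H. reflexivity.
Qed.

Lemma gmul_1r (a : G) : a * gone G = a.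
Proof.
  apply (gmul_cancel_l (inv a)). rewrite gmul_assoc, gmul_Vl, gmul_1l. reflexivity.
Qed.

Lemma gmul_Vr (a : G) : a * inv a = gone G.
Proof.
  apply (gmul_cancel_l (inv a)). rewrite gmul_assoc, gmul_Vl, gmul_1l, gmul_1r. reflexivity.
Qed.

Lemma ginv_unique (a b : G) : a * b = gone G -> inv a = b.
Proof. intro H. apply (gmul_cancel_l a). rewrite gmul_Vr. auto. Qed.

Lemma ginvK (a : G) : inv (inv a) = a.
Proof. apply ginv_unique, gmul_Vl. Qed.

Lemma ginvM (a b : G) : inv (a * b) = inv b * inv a.
Proof.
  apply ginv_unique.
  rewrite gmul_assoc, <- (gmul_assoc G a b), gmul_Vr, gmul_1r, gmul_Vr. reflexivity.
Qed.

Lemma ginv1 : inv (gone G) = gone G.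
Proof. apply ginv_unique, gmul_1l. Qed.

Lemma gpowD (a : G) m n : gpow a (m + n) = gpow a m * gpow a n.
Proof.
  induction m as [|m IH]; simpl; [now rewrite gmul_1l|].
  rewrite IH, gmul_assoc. reflexivity.
Qed.

Lemma gpowSr (a : G) n : gpow a (S n) = gpow a n * a.
Proof.
  replace (S n) with (n + 1)%nat by lia. rewrite gpowD. simpl. now rewrite gmul_1r.
Qed.

Lemma gpowM (a : G) m n : gpow a (m * n) = gpow (gpow a m) n.
Proof.
  induction n as [|n IH]; simpl; [now rewrite Nat.mul_0_r|].
  replace (m * S n)%nat with (m + m * n)%nat by lia. rewrite gpowD, IH. reflexivity.
Qed.

Lemma gpowV (a : G) n : gpow (inv a) n = inv (gpow a n).
Proof.
  induction n as [|n IH]; simpl; [now rewrite ginv1|].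
  rewrite IH, <- ginvM, <- gpowSr. reflexivity.
Qed.

End GroupTheory.

Lemma exists_nat_gt (r : R) : exists n : nat, r < INR n.
Proof.
  destruct (archimed r) as [H _]. exists (Z.to_nat (up r)).
  destruct (Z_lt_le_dec (up r) 0%Z) as [Hl|Hl].
  - replace (Z.to_nat (up r)) with 0%nat by lia. simpl. apply IZR_lt in Hl. lra.
  - rewrite INR_IZR_INZ, Z2Nat.id by exact Hl. lra.
Qed.

Lemma exists_nat_mul_gt (r eta : R) : 0 < eta -> exists n : nat, r < eta * INR n.
Proof.
  intros Heta. destruct (exists_nat_gt (r / eta)) as [n Hn]. exists n.
  apply (Rmult_lt_compat_l eta) in Hn; [|exact Heta].
  replace (eta * (r / eta)) with r in Hn by (field; lra). exact Hn.
Qed.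

Lemma count_P_ge {A : Type} (P : A -> Prop) (l bad : list A) : NoDup l ->
  (forall s, In s l -> ~ P s -> In s bad) -> (length l - length bad <= count_P P l)%nat.
Proof.
  intros Hnd Hbad. unfold count_P.
  set (f := fun s => if excluded_middle_informative (P s) then true else false).
  pose proof (filter_length f l).
  assert (length (filter (fun x => negb (f x)) l) <= length bad)%nat.
  { apply NoDup_incl_length; [now apply NoDup_filter|].
    intros s Hs. apply filter_In in Hs as [Hs Hn].
    unfold f in Hn. destruct (excluded_middle_informative (P s)); [discriminate|auto]. }
  lia.
Qed.

Lemma avoid_two {A : Type} (Rel : A -> A -> Prop) (a1 a2 a3 t1 t2 : A) :
  (forall a b t, t = t1 \/ t = t2 -> Rel a t -> Rel b t -> Rel a b) ->
  ~ Rel a1 a2 -> ~ Rel a1 a3 -> ~ Rel a2 a3 ->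
  (~ Rel a1 t1 /\ ~ Rel a1 t2) \/ (~ Rel a2 t1 /\ ~ Rel a2 t2) \/
  (~ Rel a3 t1 /\ ~ Rel a3 t2).
Proof.
  intros Htr H12 H13 H23.
  pose proof (Htr a1 a2 t1 (or_introl eq_refl)). pose proof (Htr a1 a2 t2 (or_intror eq_refl)).
  pose proof (Htr a1 a3 t1 (or_introl eq_refl)). pose proof (Htr a1 a3 t2 (or_intror eq_refl)).
  pose proof (Htr a2 a3 t1 (or_introl eq_refl)). pose proof (Htr a2 a3 t2 (or_intror eq_refl)).
  destruct (classic (Rel a1 t1)), (classic (Rel a1 t2)), (classic (Rel a2 t1)),
    (classic (Rel a2 t2)), (classic (Rel a3 t1)), (classic (Rel a3 t2)); tauto.
Qed.

Lemma count_P_all_but_two {A : Type} (P : A -> Prop) (l : list A) (a b : A) eta :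
  NoDup l -> 2 <= eta * INR (length l) -> (forall s, In s l -> ~ P s -> s = a \/ s = b) ->
  INR (count_P P l) >= (1 - eta) * INR (length l).
Proof.
  intros HND Heta Hab.
  assert (Hc : (length l - 2 <= count_P P l)%nat).
  { apply (count_P_ge P l (a :: b :: nil) HND).
    intros s Hs Hn. destruct (Hab s Hs Hn); subst; simpl; auto. }
  apply le_INR in Hc. pose proof (pos_INR (count_P P l)).
  destruct (Nat.le_gt_cases 2 (length l)).
  - rewrite minus_INR in Hc by lia. simpl in Hc. lra.
  - pose proof (le_INR (length l) 2 ltac:(lia)). simpl in *. nra.
Qed.

Definition chain {X : Type} (d : X -> X -> R) (x : nat -> X) (k : nat) (L E : R) :=
  (forall j, (j < k)%nat -> L <= d (x j) (x (S j))) /\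
  (forall j, (S j < k)%nat -> gromov d (x j) (x (S (S j))) (x (S j)) <= E).

Section GromovProduct.
Context {X : Type} {d : X -> X -> R} {delta : R}.
Hypotheses (Hm : is_metric d) (Hh : hyperbolic d delta).
Notation gp := (gromov d).

Lemma dist_ge0 x y : 0 <= d x y. Proof. apply Hm. Qed.
Lemma distC x y : d x y = d y x. Proof. apply Hm. Qed.
Lemma dist_triangle x y z : d x z <= d x y + d y z. Proof. apply Hm. Qed.
Lemma dist_xx x : d x x = 0. Proof. now apply Hm. Qed.
Lemma delta_ge0 : 0 <= delta. Proof. apply Hh. Qed.

Lemma gromovC x y z : gp x y z = gp y x z.
Proof. unfold gromov. rewrite (distC x y). lra. Qed.

Lemma gromov_le_dist_r x y z : gp x y z <= d y z.
Proof. unfold gromov. pose proof (dist_triangle x y z). pose proof (distC x y). lra. Qed.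

Lemma gromov_le_dist_l x y z : gp x y z <= d x z.
Proof. rewrite gromovC. apply gromov_le_dist_r. Qed.

Lemma gromov_ge0 x y z : 0 <= gp x y z.
Proof. unfold gromov. pose proof (dist_triangle x z y). pose proof (distC z y). lra. Qed.

Lemma gromov_add_swap p z q : gp p z q + gp q z p = d q p.
Proof.
  unfold gromov. pose proof (distC p q). pose proof (distC z q). pose proof (distC p z). lra.
Qed.

Lemma gromov_lip_l x x' y z : gp x y z <= gp x' y z + d x x'.
Proof.
  unfold gromov. pose proof (dist_triangle x x' z). pose proof (dist_triangle x' x y).
  pose proof (distC x x'). lra.
Qed.

Lemma gromov_lip_r x y y' z : gp x y z <= gp x y' z + d y y'.
Proof. rewrite (gromovC x y), (gromovC x y'). apply gromov_lip_l. Qed.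

Lemma gromov_lip_base x y p q : gp x y p <= gp x y q + d p q.
Proof.
  unfold gromov. pose proof (dist_triangle x q p). pose proof (dist_triangle y q p).
  pose proof (distC p q). lra.
Qed.

Lemma gromov_four_point x y z w t : t <= gp x z w -> t <= gp y z w -> t - delta <= gp x y w.
Proof.
  intros H1 H2. destruct Hh as [_ H]. specialize (H x y z w).
  unfold Rmin in H. destruct (Rle_dec _ _); lra.
Qed.

Lemma gromov_xx x z : gp x x z = d x z.
Proof. unfold gromov. rewrite dist_xx. pose proof (distC x z). lra. Qed.

Lemma gromov_base_l x z : gp z x z = 0.
Proof. unfold gromov. rewrite dist_xx. pose proof (distC x z). lra. Qed.

Lemma gromov_base_r x z : gp x z z = 0.
Proof. unfold gromov. rewrite dist_xx. pose proof (distC x z). lra. Qed.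

Lemma gromov_large_unique o z1 z2 x c : gp z1 z2 o <= c ->
  c + delta < gp x z1 o -> c + delta < gp x z2 o -> False.
Proof.
  intros H H1 H2. rewrite gromovC in H1, H2.
  assert (c + delta < Rmin (gp z1 x o) (gp z2 x o)) by (apply Rmin_glb_lt; lra).
  pose proof (gromov_four_point z1 z2 x o _ (Rmin_l _ _) (Rmin_r _ _)). lra.
Qed.

Lemma dist_near_geodesic o z p p' E1 E2 :
  gp o z p <= E1 -> gp o z p' <= E2 ->
  d p p' <= Rabs (d o p - d o p') + 2 * Rmax E1 E2 + 2 * delta.
Proof.
  intros H1 H2.
  pose proof (gromov_add_swap p z o) as I1. pose proof (gromov_add_swap p' z o) as I2.
  assert (Hpp : Rmin (d o p - E1) (d o p' - E2) - delta <= gp p p' o).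
  { apply gromov_four_point with (z := z).
    - pose proof (Rmin_l (d o p - E1) (d o p' - E2)). lra.
    - pose proof (Rmin_r (d o p - E1) (d o p' - E2)). lra. }
  unfold gromov in Hpp. rewrite (distC p o), (distC p' o) in Hpp.
  unfold Rmin, Rmax, Rabs in *.
  destruct (Rle_dec _ _); destruct (Rle_dec E1 E2); destruct (Rcase_abs _); lra.
Qed.

Lemma gromov_le_of_near_geodesics o z1 z2 P P' E V :
  gp o z1 P <= E -> gp o z2 P' <= E -> gp P P' o <= V ->
  V + 2 * delta < d o P - E -> V + 2 * delta < d o P' - E -> gp z1 z2 o <= V + 2 * delta.
Proof.
  intros H1 H2 HV HP HP'.
  pose proof (gromov_add_swap P z1 o). pose proof (gromov_add_swap P' z2 o).
  pose proof delta_ge0.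
  destruct (Rle_dec (gp z1 z2 o) (V + 2 * delta)) as [ok|nok]; [exact ok|exfalso].
  set (t := Rmin (gp z1 z2 o) (Rmin (gp P z1 o) (gp P' z2 o))).
  assert (t1 : t <= gp z1 z2 o) by apply Rmin_l.
  assert (t2 : t <= gp P z1 o) by (eapply Rle_trans; [apply Rmin_r|apply Rmin_l]).
  assert (t3 : t <= gp P' z2 o) by (eapply Rle_trans; [apply Rmin_r|apply Rmin_r]).
  assert (t4 : V + 2 * delta < t).
  { unfold t. apply Rmin_glb_lt; [lra|]. apply Rmin_glb_lt; lra. }
  pose proof (gromov_four_point P z2 z1 o t t2 ltac:(rewrite gromovC; lra)) as A.
  pose proof (gromov_four_point P P' z2 o (t - delta) A ltac:(lra)). lra.
Qed.

Lemma equiv_at_inf_sym w u v : equiv_at_inf d w u v -> equiv_at_inf d w v u.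
Proof.
  intros H M. destruct (H M) as [N HN]. exists N. intros n m Hn Hm'.
  rewrite gromovC. apply HN; auto.
Qed.

Lemma equiv_at_inf_trans w u v x :
  equiv_at_inf d w u v -> equiv_at_inf d w v x -> equiv_at_inf d w u x.
Proof.
  intros H1 H2 M. destruct (H1 (M + delta)) as [N1 HN1]. destruct (H2 (M + delta)) as [N2 HN2].
  exists (N1 + N2)%nat. intros n m Hn Hm'.
  assert (A1 := HN1 n (N1 + N2)%nat ltac:(lia) ltac:(lia)).
  assert (A2 := HN2 (N1 + N2)%nat m ltac:(lia) ltac:(lia)).
  rewrite gromovC in A2.
  pose proof (gromov_four_point (u n) (x m) (v (N1 + N2)%nat) w (M + delta) ltac:(lra) ltac:(lra)).
  lra.
Qed.

Lemma chain_rev x k L E : chain d x k L E -> chain d (fun i => x (k - i)%nat) k L E.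
Proof.
  intros [Hs Hj]. split.
  - intros i Hi. replace (k - i)%nat with (S (k - S i)) by lia.
    rewrite distC. apply Hs. lia.
  - intros i Hi. simpl.
    replace (k - i)%nat with (S (S (k - S (S i)))) by lia.
    replace (k - S i)%nat with (S (k - S (S i))) by lia.
    rewrite gromovC. apply Hj. lia.
Qed.

Lemma chain_prefix x k k' L E : chain d x k L E -> (k' <= k)%nat -> chain d x k' L E.
Proof. intros [H1 H2] Hk. split; intros j Hj; [apply H1|apply H2]; lia. Qed.

(* Along a chain whose steps are long compared to its corner products, the corner
   product seen from [x 0] cannot grow: the hyperbolicity loss [delta] is paid only once. *)
Lemma chain_gromov_first x k L E : chain d x k L E -> 0 <= E -> 2 * E + 3 * delta < L ->
  forall m, (S m <= k)%nat -> gp (x 0%nat) (x (S m)) (x m) <= E + delta.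
Proof.
  intros [Hs Hj] HE HL. pose proof delta_ge0.
  induction m as [|m IH]; intros Hm1.
  - rewrite gromov_base_l. lra.
  - specialize (IH ltac:(lia)).
    pose proof (gromov_add_swap (x m) (x 0%nat) (x (S m))) as I.
    rewrite (gromovC (x (S m)) (x 0%nat)), (distC (x (S m))) in I.
    pose proof (Hs m ltac:(lia)). pose proof (Hj m ltac:(lia)).
    set (A := gp (x m) (x 0%nat) (x (S m))) in *.
    set (Bv := gp (x 0%nat) (x (S (S m))) (x (S m))).
    destruct (Rle_dec Bv (E + delta)) as [ok|nok]; [exact ok|exfalso].
    pose proof (gromov_four_point (x m) (x (S (S m))) (x 0%nat) (x (S m)) (Rmin A Bv)
      (Rmin_l _ _) ltac:(rewrite gromovC; apply Rmin_r)).
    unfold Rmin in *. destruct (Rle_dec A Bv); lra.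
Qed.

Lemma chain_gromov x k L E : chain d x k L E -> 0 <= E -> 2 * E + 3 * delta < L ->
  forall j, (j <= k)%nat -> gp (x 0%nat) (x k) (x j) <= E + 2 * delta.
Proof.
  intros Hc HE HL j Hjk. pose proof delta_ge0.
  destruct j as [|j]; [rewrite gromov_base_l; lra|].
  destruct (Nat.eq_dec (S j) k) as [<-|Hne]; [rewrite gromov_base_r; lra|].
  pose proof (chain_gromov_first _ _ _ _ Hc HE HL j ltac:(lia)).
  pose proof (chain_gromov_first _ _ _ _ (chain_rev _ _ _ _ Hc) HE HL (k - S j) ltac:(lia))
    as Rv.
  simpl in Rv. rewrite Nat.sub_0_r in Rv.
  replace (k - S (k - S j))%nat with j in Rv by lia.
  replace (k - (k - S j))%nat with (S j) in Rv by lia.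
  destruct Hc as [Hs _]. pose proof (Hs j ltac:(lia)).
  pose proof (gromov_add_swap (x j) (x 0%nat) (x (S j))) as I.
  rewrite (gromovC (x (S j)) (x 0%nat)), (distC (x (S j))) in I.
  set (A := gp (x j) (x 0%nat) (x (S j))) in *.
  set (Bv := gp (x 0%nat) (x k) (x (S j))).
  destruct (Rle_dec Bv (E + 2 * delta)) as [ok|nok]; [exact ok|exfalso].
  pose proof (gromov_four_point (x j) (x k) (x 0%nat) (x (S j)) (Rmin A Bv)
    (Rmin_l _ _) ltac:(rewrite gromovC; apply Rmin_r)) as H4.
  rewrite (gromovC (x j) (x k)) in H4.
  unfold Rmin in *. destruct (Rle_dec A Bv); lra.
Qed.

End GromovProduct.

Section Action.
Variables (G : Group) (X : Type) (d : X -> X -> R) (delta : R) (act : G -> X -> X) (o : X).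
Hypotheses (Hm : is_metric d) (Hh : hyperbolic d delta) (Ha : isometric_action d act).
Notation inv := (ginv G).
Notation gp := (gromov d).

Lemma act_mul a b x : act (gmul G a b) x = act a (act b x). Proof. apply Ha. Qed.
Lemma act1 x : act (gone G) x = x. Proof. apply Ha. Qed.
Lemma dist_act a x y : d (act a x) (act a y) = d x y. Proof. apply Ha. Qed.

Lemma act_invl a x : act (inv a) (act a x) = x.
Proof. rewrite <- act_mul, gmul_Vl. apply act1. Qed.

Lemma act_invr a x : act a (act (inv a) x) = x.
Proof. rewrite <- act_mul, gmul_Vr. apply act1. Qed.

Lemma gromov_act a x y z : gp (act a x) (act a y) (act a z) = gp x y z.
Proof. unfold gromov. rewrite !dist_act. reflexivity. Qed.

Lemma gromov_translate a z : gp o (act a z) (act a o) = gp (act (inv a) o) z o.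
Proof. rewrite <- (gromov_act a (act (inv a) o) z o), act_invr. reflexivity. Qed.

Lemma dist_act_inv a : d o (act (inv a) o) = d o (act a o).
Proof. rewrite <- (dist_act a o), act_invr, (distC Hm). reflexivity. Qed.

Lemma dist_pow_inv f n : d o (act (gpow (inv f) n) o) = d o (act (gpow f n) o).
Proof. rewrite gpowV. apply dist_act_inv. Qed.

Lemma dist_pow_le f n : d o (act (gpow f n) o) <= INR n * d o (act f o).
Proof.
  induction n as [|n IH].
  - simpl. rewrite act1, (dist_xx Hm). lra.
  - rewrite S_INR. simpl. rewrite act_mul.
    pose proof (dist_triangle Hm o (act f o) (act f (act (gpow f n) o))).
    rewrite dist_act in H. lra.
Qed.

Lemma equiv_at_inf_act k u v :
  equiv_at_inf d o u v -> equiv_at_inf d o (fun n => act k (u n)) (fun n => act k (v n)).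
Proof.
  intros H M. destruct (H (M + d o (act (inv k) o))) as [N HN]. exists N.
  intros n m Hn Hm'. specialize (HN n m Hn Hm').
  rewrite <- (gromov_act (inv k) (act k (u n))), !act_invl.
  pose proof (gromov_lip_base Hm (u n) (v m) o (act (inv k) o)). lra.
Qed.

Lemma loxodromic_inv f : loxodromic d act o f -> loxodromic d act o (inv f).
Proof.
  intros [l [Hl Hc]]. exists l. split; [exact Hl|].
  intros eps Heps. destruct (Hc eps Heps) as [N HN]. exists N. intros n Hn.
  rewrite (distC Hm), dist_pow_inv, (distC Hm). apply HN, Hn.
Qed.

Lemma loxodromic_unbounded f : loxodromic d act o f ->
  forall M, exists N : nat, forall n, (N <= n)%nat -> M <= d o (act (gpow f n) o).
Proof.
  intros [l [Hl Hc]] M.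
  destruct (Hc (l/2) ltac:(lra)) as [N HN].
  destruct (exists_nat_gt (2 * M / l)) as [N2 HN2].
  exists (N + N2 + 1)%nat. intros n Hn.
  specialize (HN n ltac:(lia)). unfold Rdist, Rabs in HN.
  assert (Hpos : 0 < INR n) by (apply lt_0_INR; lia).
  assert (INR N2 <= INR n) by (apply le_INR; lia).
  assert (Hq : l / 2 < d (act (gpow f n) o) o / INR n) by (destruct (Rcase_abs _); lra).
  apply (Rmult_lt_compat_r (INR n)) in Hq; [|lra].
  assert (d (act (gpow f n) o) o / INR n * INR n = d (act (gpow f n) o) o) by (field; lra).
  assert (2 * M / l * l = 2 * M) by (field; lra).
  assert (2 * M / l * l <= INR n * l) by (apply Rmult_le_compat_r; lra).
  rewrite (distC Hm). nra.
Qed.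

Definition quasi_axis (f : G) (E : R) := forall a b : nat,
  gp (act (gpow (inv f) a) o) (act (gpow f b) o) o <= E.

Lemma quasi_axis_translate f E a c : quasi_axis f E ->
  gp o (act (gpow f a) (act (gpow f c) o)) (act (gpow f a) o) <= E.
Proof. intros H. rewrite gromov_translate, <- gpowV. apply H. Qed.

Lemma quasi_axis_dist_add f E a c : quasi_axis f E ->
  d o (act (gpow f a) o) + d o (act (gpow f c) o) - 2 * E <= d o (act (gpow f (a + c)) o).
Proof.
  intros H. pose proof (quasi_axis_translate f E a c H) as J.
  rewrite gpowD, act_mul. unfold gromov in J.
  rewrite dist_act, (distC Hm (act (gpow f c) o) o) in J. lra.
Qed.

Lemma quasi_axis_gromov_lower f E a b : quasi_axis f E ->
  Rmin (d o (act (gpow f a) o)) (d o (act (gpow f b) o)) - E <=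
  gp (act (gpow f a) o) (act (gpow f b) o) o.
Proof.
  intros H.
  assert (K : forall a c, d o (act (gpow f a) o) - E <=
      gp (act (gpow f a) o) (act (gpow f (a + c)) o) o).
  { intros a' c. rewrite gpowD, act_mul.
    rewrite <- (gromov_act (inv (gpow f a'))), !act_invl, <- gpowV.
    pose proof (gromov_add_swap Hm (act (gpow (inv f) a') o) (act (gpow f c) o) o) as I.
    rewrite dist_pow_inv in I. pose proof (H a' c). lra. }
  destruct (Compare_dec.le_lt_dec a b) as [Hab|Hab].
  - replace b with (a + (b - a))%nat by lia. pose proof (K a (b - a)%nat).
    pose proof (Rmin_l (d o (act (gpow f a) o)) (d o (act (gpow f (a + (b - a))) o))). lra.
  - replace a with (b + (a - b))%nat by lia. pose proof (K b (a - b)%nat).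
    rewrite (gromovC Hm).
    pose proof (Rmin_r (d o (act (gpow f (b + (a - b))) o)) (d o (act (gpow f b) o))). lra.
Qed.

(* The orbit of [o] under [F] is a chain with corner products all equal to the one at [F o]. *)
Lemma quasi_axis_of_straight F :
  2 * gp o (act (gpow F 2) o) (act F o) + 3 * delta < d o (act F o) ->
  quasi_axis F (gp o (act (gpow F 2) o) (act F o) + 2 * delta).
Proof.
  intros HL a b. set (E0 := gp o (act (gpow F 2) o) (act F o)) in *.
  set (x := fun i => act (gpow (inv F) a) (act (gpow F i) o)).
  assert (Hc : chain d x (a + b) (d o (act F o)) E0).
  { split.
    - intros j _. unfold x. rewrite dist_act, gpowSr, act_mul, dist_act. lra.
    - intros j _. unfold x. rewrite gromov_act.
      replace (S (S j)) with (j + 2)%nat by lia. replace (S j) with (j + 1)%nat by lia.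
      rewrite !gpowD, !act_mul, gromov_act. unfold E0. simpl. rewrite gmul_1r. lra. }
  pose proof (chain_gromov Hm Hh x (a + b) _ _ Hc (gromov_ge0 Hm _ _ _) HL a ltac:(lia)) as H.
  unfold x in H. rewrite gpowV, act_invl, gpowD, act_mul, act_invl in H.
  simpl in H. rewrite act1 in H. rewrite gpowV. exact H.
Qed.

(* With drift [l], [d(o, f^n o)] and [d(o, f^2n o)] are close to [n l] and [2 n l], so the
   corner product at [f^n o] is small compared to the step [n l]. *)
Lemma loxodromic_straight_pow f : loxodromic d act o f -> exists n : nat, n <> 0%nat /\
  2 * gp o (act (gpow (gpow f n) 2) o) (act (gpow f n) o) + 3 * delta
    < d o (act (gpow f n) o).
Proof.
  intros [l [Hl Hc]].
  destruct (Hc (l/4) ltac:(lra)) as [N HN].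
  destruct (exists_nat_gt (12 * delta / l)) as [N2 HN2].
  assert (Hb : forall n, (N <= n)%nat -> (0 < n)%nat ->
     3 * INR n * l / 4 < d o (act (gpow f n) o) < 5 * INR n * l / 4).
  { intros n Hn Hn0. specialize (HN n Hn). unfold Rdist, Rabs in HN.
    assert (Hpos : 0 < INR n) by (apply lt_0_INR; lia).
    rewrite (distC Hm). set (q := d (act (gpow f n) o) o) in *.
    assert (q = q / INR n * INR n) by (field; lra).
    destruct (Rcase_abs _); split; nra. }
  set (n0 := (N + N2 + 1)%nat). exists n0. split; [unfold n0; lia|].
  assert (H1 := Hb n0 ltac:(unfold n0; lia) ltac:(unfold n0; lia)).
  assert (H2 := Hb (n0 * 2)%nat ltac:(unfold n0; lia) ltac:(unfold n0; lia)).
  rewrite mult_INR, gpowM in H2. simpl (INR 2) in H2.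
  assert (INR N2 <= INR n0) by (apply le_INR; unfold n0; lia).
  assert (12 * delta / l * l = 12 * delta) by (field; lra).
  assert (12 * delta / l * l <= INR n0 * l) by (apply Rmult_le_compat_r; lra).
  unfold gromov. simpl in *. rewrite gmul_1r, act_mul, dist_act in *.
  rewrite (distC Hm (act (gpow f n0) o) o). nra.
Qed.

Lemma quasi_axis_of_pow f n E : n <> 0%nat -> quasi_axis (gpow f n) E ->
  quasi_axis f (E + 2 * (INR n * d o (act f o))).
Proof.
  intros Hn HR a b.
  assert (Hdec : forall (g : G) m,
    gpow g m = gmul G (gpow (gpow g n) (m / n)) (gpow g (m mod n))).
  { intros g m. rewrite <- gpowM, <- gpowD. f_equal. apply Nat.div_mod_eq. }
  assert (Hr : forall m, d o (act (gpow f (m mod n)) o) <= INR n * d o (act f o)).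
  { intros m. eapply Rle_trans; [apply dist_pow_le|].
    apply Rmult_le_compat_r; [apply (dist_ge0 Hm)|].
    apply le_INR. pose proof (Nat.mod_upper_bound m n Hn). lia. }
  rewrite (Hdec _ a), (Hdec _ b), !act_mul, (gpowV _ f n).
  specialize (HR (a / n)%nat (b / n)%nat).
  eapply Rle_trans; [apply (gromov_lip_l Hm) with (x' := act (gpow (inv (gpow f n)) (a / n)) o)|].
  eapply Rle_trans; [apply Rplus_le_compat_r, (gromov_lip_r Hm)
    with (y' := act (gpow (gpow f n) (b / n)) o)|].
  rewrite !dist_act, (distC Hm (act (gpow (inv f) _) o) o), dist_pow_inv.
  pose proof (Hr a). pose proof (Hr b).
  rewrite (distC Hm (act (gpow f (b mod n)) o) o). lra.
Qed.

Lemma loxodromic_quasi_axis f : loxodromic d act o f -> exists E, 0 <= E /\ quasi_axis f E.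
Proof.
  intros Hf. destruct (loxodromic_straight_pow f Hf) as [n [Hn Hs]].
  set (E0 := gp o (act (gpow (gpow f n) 2) o) (act (gpow f n) o) + 2 * delta).
  exists (E0 + 2 * (INR n * d o (act f o))).
  split; [|apply (quasi_axis_of_pow f n _ Hn), quasi_axis_of_straight, Hs].
  pose proof (gromov_ge0 Hm o (act (gpow (gpow f n) 2) o) (act (gpow f n) o)).
  pose proof (delta_ge0 Hh).
  pose proof (Rmult_le_pos _ _ (pos_INR n) (dist_ge0 Hm o (act f o))).
  unfold E0. lra.
Qed.

Definition orbit (f : G) (n : nat) : X := act (gpow f n) o.

(* The attracting boundary points of [f1] and [f2] coincide (see [same_endpoint_equiv]). *)
Definition same_endpoint (f1 f2 : G) := forall M, exists a b : nat,
  M <= gp (orbit f1 a) (orbit f2 b) o.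

Lemma not_same_endpoint_bounded f1 f2 : ~ same_endpoint f1 f2 ->
  exists B, forall a b, gp (orbit f1 a) (orbit f2 b) o <= B.
Proof.
  intros H. apply NNPP. intros H2. apply H. intros M.
  apply NNPP. intros H3. apply H2. exists M. intros a b.
  apply Rnot_lt_le. intros Hlt. apply H3. exists a, b. lra.
Qed.

Lemma same_endpoint_sym f1 f2 : same_endpoint f1 f2 -> same_endpoint f2 f1.
Proof.
  intros H M. destruct (H M) as [a [b Hab]]. exists b, a. rewrite (gromovC Hm). exact Hab.
Qed.

Lemma same_endpoint_trans f1 f2 v : loxodromic d act o v ->
  same_endpoint f1 v -> same_endpoint f2 v -> same_endpoint f1 f2.
Proof.
  intros Hv H1 H2 M. destruct (loxodromic_quasi_axis v Hv) as [E [HE Hax]].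
  pose proof (delta_ge0 Hh).
  set (M' := M + E + 2 * delta).
  destruct (H1 M') as [a [c Hac]]. destruct (H2 M') as [b [c' Hbc]].
  pose proof (quasi_axis_gromov_lower v E c c' Hax) as Hl.
  exists a, b. unfold orbit in *.
  set (x1 := act (gpow f1 a) o) in *. set (x2 := act (gpow f2 b) o) in *.
  set (y1 := act (gpow v c) o) in *. set (y2 := act (gpow v c') o) in *.
  pose proof (gromov_le_dist_r Hm x1 y1 o). pose proof (gromov_le_dist_r Hm x2 y2 o).
  rewrite !(distC Hm _ o) in *.
  assert (M' - E <= gp y1 y2 o).
  { unfold Rmin in Hl. destruct (Rle_dec _ _); lra. }
  pose proof (gromov_four_point Hh x2 y1 y2 o (M' - E) ltac:(lra) ltac:(lra)).
  pose proof (gromov_four_point Hh x1 x2 y1 o (M' - E - delta) ltac:(lra) ltac:(lra)).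
  unfold M' in *. lra.
Qed.

Lemma not_same_endpoint_inv f : loxodromic d act o f -> ~ same_endpoint (inv f) f.
Proof.
  intros Hf HNS. destruct (loxodromic_quasi_axis f Hf) as [E [_ Hax]].
  destruct (HNS (E + 1)) as [a [b Hab]]. specialize (Hax a b). unfold orbit in Hab. lra.
Qed.

Lemma equiv_at_inf_orbit f u : loxodromic d act o f ->
  (forall n, (1 <= n)%nat -> exists m, (n <= S m)%nat /\ u n = orbit f m) ->
  equiv_at_inf d o u (orbit f).
Proof.
  intros Hf Hu M. destruct (loxodromic_quasi_axis f Hf) as [E [_ Hax]].
  destruct (loxodromic_unbounded f Hf (M + E)) as [N0 HN0]. exists (N0 + 1)%nat.
  intros n m Hn Hm'. destruct (Hu n ltac:(lia)) as [m' [Hm1 ->]].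
  pose proof (quasi_axis_gromov_lower f E m' m Hax).
  assert (M + E <= Rmin (d o (act (gpow f m') o)) (d o (act (gpow f m) o)))
    by (apply Rmin_glb; apply HN0; lia).
  unfold orbit. lra.
Qed.

Lemma fixes_orbit_endpoint k f : loxodromic d act o f -> (k = f \/ f = inv k) ->
  fixes_bdry d act o k (orbit f).
Proof.
  intros Hf Hk. apply equiv_at_inf_orbit; [exact Hf|]. intros n Hn.
  destruct Hk as [<- | ->].
  - exists (S n). split; [lia|]. unfold orbit. simpl. rewrite act_mul. reflexivity.
  - destruct n as [|n]; [lia|]. exists n. split; [lia|].
    unfold orbit. simpl. rewrite act_mul, act_invr. reflexivity.
Qed.

Lemma same_endpoint_equiv f1 f2 : loxodromic d act o f1 -> loxodromic d act o f2 ->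
  same_endpoint f1 f2 -> equiv_at_inf d o (orbit f1) (orbit f2).
Proof.
  intros Hf1 Hf2 HNS M.
  destruct (loxodromic_quasi_axis f1 Hf1) as [E1 [HE1 R1]].
  destruct (loxodromic_quasi_axis f2 Hf2) as [E2 [HE2 R2]].
  pose proof (delta_ge0 Hh).
  set (M' := M + E1 + E2 + 2 * delta).
  destruct (HNS M') as [a [b Hab]]. unfold orbit in *.
  pose proof (gromov_le_dist_r Hm (act (gpow f1 a) o) (act (gpow f2 b) o) o).
  pose proof (gromov_le_dist_l Hm (act (gpow f1 a) o) (act (gpow f2 b) o) o).
  rewrite (distC Hm) in H0, H1.
  destruct (loxodromic_unbounded f1 Hf1 M') as [N1 HN1].
  destruct (loxodromic_unbounded f2 Hf2 M') as [N2 HN2].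
  exists (N1 + N2)%nat. intros n m Hn Hm'.
  pose proof (quasi_axis_gromov_lower f1 E1 n a R1).
  pose proof (quasi_axis_gromov_lower f2 E2 m b R2).
  assert (M' <= Rmin (d o (act (gpow f1 n) o)) (d o (act (gpow f1 a) o)))
    by (apply Rmin_glb; [apply HN1; lia|lra]).
  assert (M' <= Rmin (d o (act (gpow f2 m) o)) (d o (act (gpow f2 b) o)))
    by (apply Rmin_glb; [apply HN2; lia|lra]).
  rewrite (gromovC Hm (act (gpow f1 a) o)) in Hab.
  pose proof (gromov_four_point Hh (act (gpow f1 n) o) (act (gpow f2 b) o) (act (gpow f1 a) o) o
    (M' - E1 - E2) ltac:(lra) ltac:(lra)) as H7.
  rewrite (gromovC Hm (act (gpow f1 n) o)) in H7.
  pose proof (gromov_four_point Hh (act (gpow f1 n) o) (act (gpow f2 m) o) (act (gpow f2 b) o) o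
    (M' - E1 - E2 - delta) ltac:(rewrite (gromovC Hm); lra) ltac:(lra)).
  unfold M' in *. lra.
Qed.

Lemma same_endpoint_common_fixed g h f1 f2 :
  loxodromic d act o f1 -> loxodromic d act o f2 ->
  (g = f1 \/ f1 = inv g) -> (h = f2 \/ f2 = inv h) -> same_endpoint f1 f2 ->
  exists u, conv_at_inf d o u /\ fixes_bdry d act o g u /\ fixes_bdry d act o h u.
Proof.
  intros Hf1 Hf2 Hg Hh' HNS. exists (orbit f1).
  pose proof (same_endpoint_equiv f1 f2 Hf1 Hf2 HNS) as Heq.
  split; [|split].
  - apply equiv_at_inf_orbit; [exact Hf1|]. intros n _. exists n. split; auto.
  - apply fixes_orbit_endpoint; auto.
  - unfold fixes_bdry.
    apply (equiv_at_inf_trans Hm Hh) with (fun n => act h (orbit f2 n)); [now apply equiv_at_inf_act|].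
    apply (equiv_at_inf_trans Hm Hh) with (orbit f2); [now apply fixes_orbit_endpoint|].
    now apply (equiv_at_inf_sym Hm).
Qed.

Lemma stab_finite_conj K x y a :
  stab_finite d act K x y -> stab_finite d act K (act a x) (act a y).
Proof.
  intros [l Hl]. exists (map (fun k => gmul G a (gmul G k (inv a))) l).
  intros k' H1 H2. set (k := gmul G (inv a) (gmul G k' a)).
  assert (Hk : forall z, act k z = act (inv a) (act k' (act a z)))
    by (intros z; unfold k; rewrite !act_mul; reflexivity).
  apply in_map_iff. exists k. split.
  - unfold k. rewrite !gmul_assoc, gmul_Vr, gmul_1l, <- gmul_assoc, gmul_Vr, gmul_1r.
    reflexivity.
  - apply Hl; rewrite Hk, <- (dist_act a), act_invr; assumption.
Qed.

(* An element moving [o] and [z] by at most [K] moves every point near a geodesic [o, z]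
   by a bounded amount. *)
Lemma stab_finite_of_near_geodesic K K' E z q1 q2 : 0 <= K ->
  5 * K + 2 * E + 2 * delta <= K' ->
  gp o z q1 <= E -> gp o z q2 <= E -> stab_finite d act K' q1 q2 -> stab_finite d act K o z.
Proof.
  intros HK HK' H1 H2 [l Hl]. exists l. intros k Ho Hz.
  assert (Gen : forall q, gp o z q <= E -> d q (act k q) <= K').
  { intros q Hq.
    assert (Hkq : gp o z (act k q) <= E + 2 * K).
    { pose proof (gromov_act k o z q).
      pose proof (gromov_lip_l Hm o (act k o) z (act k q)).
      pose proof (gromov_lip_r Hm (act k o) z (act k z) (act k q)).
      lra. }
    pose proof (dist_near_geodesic Hm Hh o z q (act k q) E (E + 2 * K) Hq Hkq).
    assert (Rabs (d o q - d o (act k q)) <= K).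
    { rewrite <- (dist_act k o q).
      pose proof (dist_triangle Hm o (act k o) (act k q)).
      pose proof (dist_triangle Hm (act k o) o (act k q)).
      rewrite (distC Hm (act k o) o) in *. apply Rabs_le. lra. }
    rewrite Rmax_right in *; lra. }
  apply Hl; apply Gen; auto.
Qed.

Lemma ping_pong s x y c : gp x (act s o) o <= c -> gp y (act (inv s) o) o <= c ->
  2 * c + delta < d o (act s o) -> gp x (act s y) o <= c + delta.
Proof.
  intros H1 H2 H3.
  assert (E1 : gp (act s y) (act s o) o = gp y o (act (inv s) o))
    by (rewrite <- (gromov_act (inv s) (act s y)), !act_invl; reflexivity).
  pose proof (gromov_add_swap Hm (act (inv s) o) y o) as I.
  rewrite dist_act_inv, (gromovC Hm o y), (gromovC Hm (act (inv s) o)) in I.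
  apply Rnot_lt_le. intros Hlt.
  set (t := Rmin (gp x (act s y) o) (gp (act s y) (act s o) o)).
  assert (c + delta < t) by (apply Rmin_glb_lt; lra).
  pose proof (gromov_four_point Hh x (act s o) (act s y) o t (Rmin_l _ _)
    ltac:(rewrite (gromovC Hm (act s o)); apply Rmin_r)).
  lra.
Qed.

Lemma at_most_one_far (S : list G) (phi : G -> X) c z :
  (forall s s', In s S -> In s' S -> s <> s' -> gp (phi s) (phi s') o <= c) ->
  exists a, forall s, In s S -> c + delta < gp z (phi s) o -> s = a.
Proof.
  intros Hsep.
  destruct (classic (exists s0, In s0 S /\ c + delta < gp z (phi s0) o)) as [[s0 [H0 H1]]|Hn].
  - exists s0. intros s Hs Hb. apply NNPP. intros Hne.
    apply (gromov_large_unique Hm Hh o (phi s) (phi s0) z c); auto.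
  - exists (gone G). intros s Hs Hb. exfalso. apply Hn. exists s. auto.
Qed.

(* [s] can only fail the ping-pong estimate for [x, y] if [s o] is far in the direction of
   [x] or [s^-1 o] is far in the direction of [y], and separation makes each case unique. *)
Lemma ping_pong_count eta c C (S : list G) (phi : G -> G) x y : NoDup S ->
  c + 2 * delta <= C -> 2 <= eta * INR (length S) ->
  (forall s s', In s S -> In s' S -> s <> s' -> gp (act (phi s) o) (act (phi s') o) o <= c /\
     gp (act (inv (phi s)) o) (act (inv (phi s')) o) o <= c) ->
  (forall s, In s S -> 2 * C < d o (act (phi s) o)) ->
  INR (count_P (fun s => gp x (act (phi s) y) o <= C) S) >= (1 - eta) * INR (length S).
Proof.
  intros HND HC Heta Hsep Hlong. pose proof (delta_ge0 Hh).
  destruct (at_most_one_far S (fun s => act (phi s) o) c x) as [a Ha'];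
    [intros; apply Hsep; auto|].
  destruct (at_most_one_far S (fun s => act (inv (phi s)) o) c y) as [b Hb];
    [intros; apply Hsep; auto|].
  apply (count_P_all_but_two _ _ a b eta HND Heta). intros s Hs Hn.
  destruct (Rle_dec (gp x (act (phi s) o) o) (c + delta)) as [h1|h1];
    [|left; apply Ha'; auto; lra].
  destruct (Rle_dec (gp y (act (inv (phi s)) o) o) (c + delta)) as [h2|h2];
    [|right; apply Hb; auto; lra].
  exfalso. apply Hn. pose proof (Hlong s Hs).
  pose proof (ping_pong (phi s) x y (c + delta) h1 h2 ltac:(lra)). lra.
Qed.

Lemma schottky_of_separated eta c C D (S : list G) : NoDup S -> c + 2 * delta <= C ->
  2 <= eta * INR (length S) ->
  (forall s s', In s S -> In s' S -> s <> s' ->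
     gp (act s o) (act s' o) o <= c /\ gp (act (inv s) o) (act (inv s') o) o <= c) ->
  (forall s, In s S -> 2 * C < d o (act s o) /\ D <= d o (act s o)) ->
  schottky d act o eta C D S.
Proof.
  intros HND HC Heta Hsep Hlong.
  split; [intros x y; split|intros s Hs; apply Rle_ge, Hlong, Hs].
  - apply (ping_pong_count eta c C S (fun s => s)); auto. apply Hlong.
  - apply (ping_pong_count eta c C S inv); auto.
    + intros s s' Hs Hs' Hne. rewrite !ginvK. apply and_comm, Hsep; auto.
    + intros s Hs. rewrite dist_act_inv. apply Hlong, Hs.
Qed.

Definition path5 (l1 l2 l3 l4 l5 : G) (k : nat) : X :=
  match k with
  | 0 => o
  | 1 => act l1 o
  | 2 => act l1 (act l2 o)
  | 3 => act l1 (act l2 (act l3 o))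
  | 4 => act l1 (act l2 (act l3 (act l4 o)))
  | _ => act l1 (act l2 (act l3 (act l4 (act l5 o))))
  end.

Lemma path5_chain l1 l2 l3 l4 l5 L E :
  L <= d o (act l1 o) -> L <= d o (act l2 o) -> L <= d o (act l3 o) ->
  L <= d o (act l4 o) -> L <= d o (act l5 o) ->
  gp (act (inv l1) o) (act l2 o) o <= E -> gp (act (inv l2) o) (act l3 o) o <= E ->
  gp (act (inv l3) o) (act l4 o) o <= E -> gp (act (inv l4) o) (act l5 o) o <= E ->
  chain d (path5 l1 l2 l3 l4 l5) 5 L E.
Proof.
  intros D1 D2 D3 D4 D5 J1 J2 J3 J4. split.
  - intros j Hj. destruct j as [|[|[|[|[|j]]]]]; simpl; try lia; rewrite ?dist_act; auto.
  - intros j Hj. destruct j as [|[|[|[|j]]]]; simpl; try lia;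
      rewrite ?gromov_act, gromov_translate; auto.
Qed.

Definition sandwich (Y Xl Z : G) : G :=
  gmul G Y (gmul G Xl (gmul G Z (gmul G (inv Xl) (inv Y)))).

Lemma sandwich_inv Y Xl Z : inv (sandwich Y Xl Z) = sandwich Y Xl (inv Z).
Proof. unfold sandwich. rewrite !ginvM, !ginvK, !gmul_assoc. reflexivity. Qed.

(* The orbit point of [Y Xl Z Xl^-1 Y^-1] is reached along the chain of letters; when the
   letters are long and consecutive letters do not backtrack, the chain is a quasi-geodesic. *)
Lemma sandwich_estimates Y Xl Z L B :
  0 <= B -> 2 * B + 3 * delta < L ->
  L <= d o (act Y o) -> L <= d o (act Xl o) -> L <= d o (act Z o) ->
  gp (act (inv Y) o) (act Xl o) o <= B -> gp (act (inv Xl) o) (act Z o) o <= B ->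
  gp (act (inv Z) o) (act (inv Xl) o) o <= B -> gp (act Xl o) (act (inv Y) o) o <= B ->
  gp o (act (sandwich Y Xl Z) o) (act Y o) <= B + 2 * delta /\
  gp o (act (sandwich Y Xl Z) o) (act Y (act Xl o)) <= B + 2 * delta /\
  gp o (act (sandwich Y Xl Z) o) (act Y (act Xl (act Z o))) <= B + 2 * delta /\
  d o (act Y o) + L - 2 * (B + 2 * delta) <= d o (act Y (act Xl o)) /\
  d o (act Z o) - 4 * (B + 2 * delta) <= d o (act (sandwich Y Xl Z) o).
Proof.
  intros HB HL D1 D2 D3 J1 J2 J3 J4.
  assert (Hc : chain d (path5 Y Xl Z (inv Xl) (inv Y)) 5 L B)
    by (apply path5_chain; rewrite ?dist_act_inv, ?ginvK; auto).
  replace (act (sandwich Y Xl Z) o) with (path5 Y Xl Z (inv Xl) (inv Y) 5)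
    by (unfold sandwich, path5; rewrite !act_mul; reflexivity).
  pose proof (chain_gromov Hm Hh _ _ _ _ Hc HB HL) as C5.
  pose proof (chain_gromov Hm Hh _ _ _ _ (chain_prefix _ _ 3 _ _ Hc ltac:(lia)) HB HL 2%nat
    ltac:(lia)) as C3.
  pose proof (chain_gromov Hm Hh _ _ _ _ (chain_prefix _ _ 2 _ _ Hc ltac:(lia)) HB HL 1%nat
    ltac:(lia)) as C2.
  pose proof (C5 1%nat ltac:(lia)). pose proof (C5 2%nat ltac:(lia)).
  pose proof (C5 3%nat ltac:(lia)). simpl in *.
  split; [auto|split; [auto|split; [auto|]]].
  unfold gromov in *. rewrite !dist_act in *.
  pose proof (dist_ge0 Hm (act (inv Xl) (act (inv Y) o)) o).
  pose proof (dist_ge0 Hm o (act Y (act Xl o))).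
  rewrite (distC Hm (act Xl o) o) in C2. rewrite (distC Hm (act Z o) o) in C3.
  split; lra.
Qed.

Definition stab_finite_powers (w : G) :=
  forall K, K >= 0 -> exists P : nat, stab_finite d act K o (orbit w P).

Definition uniform_schottky (eta : R) := exists C, C > 0 /\ forall D K, D > 0 -> K > 0 ->
  exists S : list G, S <> nil /\ NoDup S /\ schottky d act o eta C D S /\
    forall s, In s S -> stab_finite d act K o (act s o).

Lemma stab_finite_orbit_eventually w : loxodromic d act o w ->
  stab_finite_powers w ->
  forall K, 0 <= K -> exists P : nat, forall n, (P <= n)%nat -> stab_finite d act K o (orbit w n).
Proof.
  intros Hw HWPD K HK. destruct (loxodromic_quasi_axis w Hw) as [Ew [HEw Rw]].
  pose proof (delta_ge0 Hh).
  destruct (HWPD (5 * K + 2 * Ew + 2 * delta) ltac:(lra)) as [P HP].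
  exists P. intros n HPn.
  assert (Hlet : gp o (orbit w n) (orbit w P) <= Ew).
  { unfold orbit. replace n with (P + (n - P))%nat by lia.
    rewrite gpowD, act_mul. apply quasi_axis_translate, Rw. }
  apply (stab_finite_of_near_geodesic K _ Ew _ o (orbit w P) HK (Rle_refl _));
    [|exact Hlet|exact HP].
  rewrite (gromov_base_l Hm). lra.
Qed.

Lemma schottky_of_separated_seq eta c C D (f : nat -> G) N :
  2 <= eta * INR N -> c + 2 * delta <= C ->
  (forall i j, (i < N)%nat -> (j < N)%nat -> i <> j ->
     gp (act (f i) o) (act (f j) o) o <= c /\
     gp (act (inv (f i)) o) (act (inv (f j)) o) o <= c) ->
  (forall i, (i < N)%nat -> 2 * C < d o (act (f i) o) /\ D <= d o (act (f i) o)) ->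
  NoDup (map f (seq 0 N)) /\ schottky d act o eta C D (map f (seq 0 N)).
Proof.
  intros Heta HC Hsep Hlong. pose proof (delta_ge0 Hh).
  assert (HS : forall s, In s (map f (seq 0 N)) -> exists i, (i < N)%nat /\ s = f i).
  { intros s Hs. apply in_map_iff in Hs as [i [<- Hi]]. apply in_seq in Hi.
    exists i. split; [lia|reflexivity]. }
  assert (HND : NoDup (map f (seq 0 N))).
  { apply NoDup_map_NoDup_ForallPairs; [|apply seq_NoDup].
    intros i j Hi Hj Hf. apply in_seq in Hi, Hj. apply NNPP. intros Hij.
    destruct (Hsep i j ltac:(lia) ltac:(lia) Hij) as [Hc _].
    rewrite Hf, (gromov_xx Hm), (distC Hm) in Hc.
    pose proof (Hlong j ltac:(lia)). pose proof (dist_ge0 Hm o (act (f j) o)). lra. }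
  split; [exact HND|].
  apply (schottky_of_separated eta c C D _ HND HC).
  - rewrite length_map, length_seq. exact Heta.
  - intros s s' Hs Hs' Hne.
    destruct (HS s Hs) as [i [Hi ->]]. destruct (HS s' Hs') as [j [Hj ->]].
    apply Hsep; [exact Hi|exact Hj|intros ->; auto].
  - intros s Hs. destruct (HS s Hs) as [i [Hi ->]]. auto.
Qed.

Section SandwichFamily.
Variables (p q : G) (B Eq : R).
Hypotheses (HB : 0 <= B) (HEq : 0 <= Eq) (Hq : quasi_axis q Eq)
  (Hpq : forall a b, gp (orbit (inv p) a) (orbit (inv q) b) o <= B)
  (Hpq' : forall a b, gp (orbit (inv p) a) (orbit q b) o <= B).
Variable M : nat.
Let L := 4 * B + 8 * delta + 2 * Eq + 1.
Hypotheses (HqM : forall m, (M <= m)%nat -> L <= d o (orbit q m))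
  (HpM : L <= d o (orbit (inv p) M)).
Local Notation Y i := (gpow q (M * S i)).
Local Notation Xl := (gpow (inv p) M).

Section MiddleLetter.
Variable Z : G.
Hypotheses (HZ : gp (orbit p M) (act Z o) o <= B) (HZ' : gp (orbit p M) (act (inv Z) o) o <= B)
  (HZL : L <= d o (act Z o)).

Lemma sandwich_family_estimates i :
  gp o (act (sandwich (Y i) Xl Z) o) (act (Y i) o) <= B + 2 * delta /\
  gp o (act (sandwich (Y i) Xl Z) o) (act (Y i) (act Xl o)) <= B + 2 * delta /\
  gp o (act (sandwich (Y i) Xl Z) o) (act (Y i) (act Xl (act Z o))) <= B + 2 * delta /\
  d o (act (Y i) o) + L - 2 * (B + 2 * delta) <= d o (act (Y i) (act Xl o)) /\
  d o (act Z o) - 4 * (B + 2 * delta) <= d o (act (sandwich (Y i) Xl Z) o).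
Proof.
  pose proof (delta_ge0 Hh).
  assert (HinvY : act (inv (Y i)) o = orbit (inv q) (M * S i))
    by (unfold orbit; rewrite gpowV; reflexivity).
  assert (HinvX : act (inv Xl) o = orbit p M)
    by (unfold orbit; rewrite gpowV, ginvK; reflexivity).
  apply sandwich_estimates; auto; try (unfold L in *; lra).
  - apply HqM. nia.
  - rewrite HinvY, (gromovC Hm). apply Hpq.
  - rewrite HinvX. exact HZ.
  - rewrite HinvX, (gromovC Hm). exact HZ'.
  - rewrite HinvY. apply Hpq.
Qed.

(* [s_i o] and [s_j o] both pass near [Y_i o]; beyond it one heads to [Y_i Xl o], the other
   to [Y_j o = Y_i q^(M(j-i)) o], and [Xl = p^-M] and [q^(M(j-i))] diverge at [o]. *)
Lemma sandwich_family_separated i j : (i < j)%nat ->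
  gp (act (sandwich (Y i) Xl Z) o) (act (sandwich (Y j) Xl Z) o) o
    <= B + d o (act (Y i) o) + 2 * delta.
Proof.
  intros Hij. pose proof (delta_ge0 Hh).
  destruct (sandwich_family_estimates i) as [_ [Fi [_ [Fi' _]]]].
  destruct (sandwich_family_estimates j) as [Fj _].
  set (Q := gpow q (M * (j - i))).
  assert (HYj : Y j = gmul G (Y i) Q) by (unfold Q; rewrite <- gpowD; f_equal; nia).
  assert (HQ : L <= d o (act Q o)) by (apply HqM; nia).
  assert (HYjd : d o (act (Y i) o) + d o (act Q o) - 2 * Eq <= d o (act (Y j) o)).
  { unfold Q. replace (M * S j)%nat with (M * S i + M * (j - i))%nat by nia.
    apply quasi_axis_dist_add, Hq. }
  assert (HPP : gp (act (Y i) (act Xl o)) (act (Y j) o) o <= B + d o (act (Y i) o)).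
  { rewrite HYj, act_mul.
    pose proof (gromov_lip_base Hm (act (Y i) (act Xl o)) (act (Y i) (act Q o)) o (act (Y i) o)).
    rewrite gromov_act in H0. pose proof (Hpq' M (M * (j - i))). unfold orbit in H1.
    fold Q in H1. lra. }
  apply (gromov_le_of_near_geodesics Hm Hh o _ _ _ _ (B + 2 * delta) _ Fi Fj HPP);
    unfold L in *; lra.
Qed.

Lemma sandwich_family_separated_uniform N i j : (i < N)%nat -> (j < N)%nat -> i <> j ->
  gp (act (sandwich (Y i) Xl Z) o) (act (sandwich (Y j) Xl Z) o) o
    <= B + INR (M * N) * d o (act q o) + 2 * delta.
Proof.
  intros Hi Hj Hij.
  assert (HY : forall k, (k < N)%nat -> d o (act (Y k) o) <= INR (M * N) * d o (act q o)).
  { intros k Hk. eapply Rle_trans; [apply dist_pow_le|].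
    apply Rmult_le_compat_r; [apply (dist_ge0 Hm)|]. apply le_INR. nia. }
  destruct (Nat.lt_gt_cases i j) as [[Hlt|Hlt] _]; [exact Hij| |].
  - pose proof (sandwich_family_separated i j Hlt). pose proof (HY i Hi). lra.
  - rewrite (gromovC Hm). pose proof (sandwich_family_separated j i Hlt). pose proof (HY j Hj).
    lra.
Qed.

Lemma sandwich_family_stab i K : 0 <= K ->
  stab_finite d act (5 * K + 2 * (B + 2 * delta) + 2 * delta) o (act Z o) ->
  stab_finite d act K o (act (sandwich (Y i) Xl Z) o).
Proof.
  intros HK HZs. destruct (sandwich_family_estimates i) as [_ [F2 [F3 _]]].
  apply (stab_finite_of_near_geodesic K _ _ _ _ _ HK (Rle_refl _) F2 F3).
  pose proof (stab_finite_conj _ o (act Z o) (gmul G (Y i) Xl) HZs) as Hc.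
  rewrite !act_mul in Hc. exact Hc.
Qed.

End MiddleLetter.

Lemma sandwich_family_schottky eta C D N Z : 0 <= D ->
  2 <= eta * INR N -> B + INR (M * N) * d o (act q o) + 4 * delta <= C ->
  gp (orbit p M) (act Z o) o <= B -> gp (orbit p M) (act (inv Z) o) o <= B ->
  L + D + 2 * C + 4 * (B + 2 * delta) <= d o (act Z o) ->
  NoDup (map (fun i => sandwich (Y i) Xl Z) (seq 0 N)) /\
  schottky d act o eta C D (map (fun i => sandwich (Y i) Xl Z) (seq 0 N)).
Proof.
  intros HD Heta HC HZ HZ' HZL. pose proof (delta_ge0 Hh).
  pose proof (Rmult_le_pos _ _ (pos_INR (M * N)) (dist_ge0 Hm o (act q o))).
  assert (HL : 0 < L) by (unfold L; lra).
  apply (schottky_of_separated_seq eta (B + INR (M * N) * d o (act q o) + 2 * delta));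
    [exact Heta|lra| |].
  - intros i j Hi Hj Hij. rewrite !sandwich_inv. split.
    + apply sandwich_family_separated_uniform; auto. lra.
    + apply sandwich_family_separated_uniform; rewrite ?ginvK, ?dist_act_inv; auto. lra.
  - intros i Hi.
    destruct (sandwich_family_estimates Z HZ HZ' ltac:(lra) i) as [_ [_ [_ [_ Hlong]]]].
    split; lra.
Qed.

End SandwichFamily.

(* The constant [C] depends on [eta] through the number [N] of sandwiches, but not on [D] or
   [K]: only the power [W] of [w] in the middle of the sandwiches is adapted to [D] and [K]. *)
Lemma schottky_sandwiches p q w B :
  loxodromic d act o p -> loxodromic d act o q -> loxodromic d act o w ->
  stab_finite_powers w -> 0 <= B ->
  (forall a b, gp (orbit (inv p) a) (orbit (inv q) b) o <= B) ->
  (forall a b, gp (orbit (inv p) a) (orbit q b) o <= B) ->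
  (forall a b, gp (orbit p a) (orbit w b) o <= B) ->
  (forall a b, gp (orbit p a) (orbit (inv w) b) o <= B) ->
  forall eta, 0 < eta < 1 -> uniform_schottky eta.
Proof.
  intros Hp Hq Hw HWPD HB Hpq Hpq' Hpw Hpw' eta Heta. pose proof (delta_ge0 Hh).
  destruct (loxodromic_quasi_axis q Hq) as [Eq [HEq Rq]].
  destruct (exists_nat_mul_gt 2 eta (proj1 Heta)) as [N HetaN].
  set (L := 4 * B + 8 * delta + 2 * Eq + 1).
  destruct (loxodromic_unbounded q Hq L) as [Nq HNq].
  destruct (loxodromic_unbounded (inv p) (loxodromic_inv p Hp) L) as [Np HNp].
  set (M := (Nq + Np)%nat).
  set (C := B + INR (M * N) * d o (act q o) + 4 * delta + 1).
  assert (HC : 0 < C)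
    by (pose proof (Rmult_le_pos _ _ (pos_INR (M * N)) (dist_ge0 Hm o (act q o))); unfold C; lra).
  exists C. split; [exact HC|].
  intros D K HD HK.
  destruct (stab_finite_orbit_eventually w Hw HWPD (5 * K + 2 * (B + 2 * delta) + 2 * delta)
    ltac:(lra)) as [P HP].
  destruct (loxodromic_unbounded w Hw (L + D + 2 * C + 4 * (B + 2 * delta))) as [Nw HNw].
  assert (HWL := HNw (P + Nw)%nat ltac:(lia)).
  assert (HqM : forall m, (M <= m)%nat -> L <= d o (orbit q m))
    by (intros m Hm'; apply HNq; unfold M in *; lia).
  assert (HpM : L <= d o (orbit (inv p) M)) by (apply HNp; unfold M; lia).
  assert (HW' : gp (orbit p M) (act (inv (gpow w (P + Nw))) o) o <= B)
    by (rewrite <- gpowV; apply Hpw').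
  destruct (sandwich_family_schottky p q B Eq HB HEq Rq Hpq Hpq' M HqM HpM eta C D N
    (gpow w (P + Nw)) ltac:(lra) ltac:(lra) ltac:(unfold C; lra) (Hpw _ _) HW' HWL)
    as [HND HS].
  exists (map (fun i => sandwich (gpow q (M * S i)) (gpow (inv p) M) (gpow w (P + Nw)))
    (seq 0 N)).
  split; [destruct N; [simpl in HetaN; lra|discriminate]|split; [exact HND|split; [exact HS|]]].
  intros s Hs. apply in_map_iff in Hs as [i [<- _]].
  apply (sandwich_family_stab p q B Eq HB HEq Hpq M HqM HpM);
    [apply Hpw|exact HW'|unfold L in *; lra|lra|apply HP; lia].
Qed.

Lemma schottky_of_independent p q w :
  loxodromic d act o p -> loxodromic d act o q -> loxodromic d act o w ->
  stab_finite_powers w ->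
  ~ same_endpoint (inv p) (inv q) -> ~ same_endpoint (inv p) q ->
  ~ same_endpoint p w -> ~ same_endpoint p (inv w) ->
  forall eta, 0 < eta < 1 -> uniform_schottky eta.
Proof.
  intros Hp Hq Hw HWPD N1 N2 N3 N4.
  destruct (not_same_endpoint_bounded _ _ N1) as [B1 H1].
  destruct (not_same_endpoint_bounded _ _ N2) as [B2 H2].
  destruct (not_same_endpoint_bounded _ _ N3) as [B3 H3].
  destruct (not_same_endpoint_bounded _ _ N4) as [B4 H4].
  pose proof (Rle_abs B1). pose proof (Rle_abs B2). pose proof (Rle_abs B3).
  pose proof (Rle_abs B4). pose proof (Rabs_pos B1). pose proof (Rabs_pos B2).
  pose proof (Rabs_pos B3). pose proof (Rabs_pos B4).
  apply (schottky_sandwiches p q w (Rabs B1 + Rabs B2 + Rabs B3 + Rabs B4)); auto;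
    try lra; intros a b; [specialize (H1 a b)|specialize (H2 a b)|specialize (H3 a b)|
    specialize (H4 a b)]; lra.
Qed.

Lemma non_elementary_distinct_endpoints g h f1 f2 :
  loxodromic d act o g -> loxodromic d act o h ->
  ~ (exists u, conv_at_inf d o u /\ fixes_bdry d act o g u /\ fixes_bdry d act o h u) ->
  (g = f1 \/ f1 = inv g) -> (h = f2 \/ f2 = inv h) -> ~ same_endpoint f1 f2.
Proof.
  intros Hg Hh' Hgh Hf1 Hf2 HNS. apply Hgh.
  apply (same_endpoint_common_fixed g h f1 f2); auto.
  - destruct Hf1 as [<- | ->]; auto using loxodromic_inv.
  - destruct Hf2 as [<- | ->]; auto using loxodromic_inv.
Qed.

Lemma schottky_of_non_elementary_wpd g h w :
  loxodromic d act o g -> loxodromic d act o h ->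
  ~ (exists u, conv_at_inf d o u /\ fixes_bdry d act o g u /\ fixes_bdry d act o h u) ->
  loxodromic d act o w ->
  stab_finite_powers w ->
  forall eta, 0 < eta < 1 -> uniform_schottky eta.
Proof.
  intros Hg Hh' Hgh Hw HWPD.
  pose proof (fun f1 f2 => non_elementary_distinct_endpoints g h f1 f2 Hg Hh' Hgh) as Hdist.
  destruct (avoid_two same_endpoint g (inv g) h w (inv w)) as [[N1 N2]|[[N1 N2]|[N1 N2]]].
  - intros a b t [-> | ->] Ha' Hb;
      [apply (same_endpoint_trans a b w)|apply (same_endpoint_trans a b (inv w))];
      auto using loxodromic_inv.
  - intros HNS. apply (not_same_endpoint_inv g Hg), same_endpoint_sym, HNS.
  - apply Hdist; auto.
  - apply Hdist; auto.
  - apply (schottky_of_independent g h w); auto; apply Hdist; auto.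
  - apply (schottky_of_independent (inv g) h w); rewrite ?ginvK; auto using loxodromic_inv;
      apply Hdist; auto.
  - apply (schottky_of_independent h g w); auto; intros HNS.
    + apply (Hdist (inv g) (inv h)); auto. now apply same_endpoint_sym.
    + apply (Hdist g (inv h)); auto. now apply same_endpoint_sym.
Qed.

End Action.

Theorem lemma5p5 (G : Group) (X : Type) (d : X -> X -> R) (delta : R)
  (act : G -> X -> X) (o : X) :
  is_metric d -> geodesic_space d -> hyperbolic d delta ->
  isometric_action d act ->
  non_elementary d act o ->
  (exists g : G, WPD d act o g) ->
  forall eta : R, 0 < eta < 1 ->
  exists C : R, C > 0 /\
    forall D K : R, D > 0 -> K > 0 ->
      exists S : list G, S <> nil /\ NoDup S /\
        schottky d act o eta C D S /\
        forall s, In s S -> stab_finite d act K o (act s o).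
Proof.
  intros Hm _ Hh Ha [g [h [Hg [Hh' Hgh]]]] [w [Hw HwW]].
  apply (schottky_of_non_elementary_wpd G X d delta act o Hm Hh Ha g h w); auto.
  intros K HK. destruct (HwW o K HK) as [P [_ HP]]. now exists P.
Qed.
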